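(* Let $t>1$, $\eta>1$, $m\ge1$, $d>0$ and $w\in(0,1)$, and suppose $$d\le\frac{\eta\log(1/w)}{t}+\frac{2\eta\log(m+\log_\eta t)}{t}.$$ Then $$t\le\frac{2\eta}{d}\log\Big(2m+2+2\log_\eta\frac{2}{\log\eta}+2[\log_\eta(1/d)]_+\Big)+\frac{2\eta}{d}\log(1/w),$$ where $[x]_+=\max\{x,0\}$. *)

From Stdlib Require Import Reals.
Open Scope R_scope.

Definition logb (b x : R) : R := ln x / ln b.

Definition pos_part (x : R) : R := Rmax x 0.

From Stdlib Require Import Reals Lra.
Open Scope R_scope.

(* Write u = log_eta t and X for the argument of the logarithm in the
   conclusion.  If d t >= 4 eta ln (m + u), the hypothesis absorbs its second
   term and gives d t <= 2 eta ln (1/w).  Otherwise take logarithms of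
   d t < 4 eta ln (m + u): the tangent bound ln (ln x) <= c x - 2 - ln c with
   c = (ln eta) / 2 turns this into u < m + 2 + 2 [log_eta (1/d)]_+
   + 2 log_eta (2 / ln eta), i.e. m + u < X, and then the hypothesis gives
   d t <= eta ln (1/w) + 2 eta ln X. *)

Lemma ln_le_sub1 (x : R) : 0 < x -> ln x <= x - 1.
Proof.
  intros Hx.
  pose proof (exp_ineq1_le (ln x)) as Hexp.
  rewrite exp_ln in Hexp; lra.
Qed.

Lemma ln_le (x y : R) : 0 < x -> x <= y -> ln x <= ln y.
Proof.
  intros Hx [Hxy | ->]; [left; apply ln_increasing |]; lra.
Qed.

Lemma ln_gt0 (x : R) : 1 < x -> 0 < ln x.
Proof. intros Hx. rewrite <- ln_1. apply ln_increasing; lra. Qed.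

Lemma ln_ge0 (x : R) : 1 <= x -> 0 <= ln x.
Proof. intros Hx. rewrite <- ln_1. apply ln_le; lra. Qed.

Lemma ln_ln_le (c x : R) : 0 < c -> 1 < x -> ln (ln x) + ln c + 2 <= c * x.
Proof.
  intros Hc Hx.
  pose proof (ln_gt0 x Hx) as Hlnx.
  pose proof (ln_le_sub1 (ln x) Hlnx) as Hlnlnx.
  pose proof (ln_le_sub1 (c * x) ltac:(nra)) as Hlncx.
  rewrite ln_mult in Hlncx by lra.
  lra.
Qed.

Lemma ln_2_div_ge (c : R) : 0 < c -> 1 - c / 2 <= ln (2 / c).
Proof.
  intros Hc.
  replace (2 / c) with (/ (c / 2)) by (field; lra).
  rewrite ln_Rinv by lra.
  pose proof (ln_le_sub1 (c / 2) ltac:(lra)); lra.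
Qed.

Lemma logb_2_div_ln_ge (b : R) : 1 < b -> - (1 / 2) <= logb b (2 / ln b).
Proof.
  intros Hb.
  pose proof (ln_gt0 b Hb) as Hlnb.
  pose proof (ln_2_div_ge (ln b) Hlnb) as H2.
  unfold logb.
  apply (Rmult_le_reg_r (ln b)); [lra |].
  unfold Rdiv at 2; rewrite Rmult_assoc, Rinv_l by lra.
  lra.
Qed.

Lemma ln_le_mul_pos_part_logb (b x : R) :
  1 < b -> ln x <= ln b * pos_part (logb b x).
Proof.
  intros Hb.
  pose proof (ln_gt0 b Hb) as Hlnb.
  replace (ln x) with (ln b * logb b x) at 1 by (unfold logb; field; lra).
  apply Rmult_le_compat_l; [lra | apply Rmax_l].
Qed.

Lemma add_logb_le_of_mul_lt (eta m t d : R) :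
  1 < eta -> 1 <= m -> 1 < t -> 0 < d ->
  d * t < 4 * eta * ln (m + logb eta t) ->
  m + logb eta t <=
    2 * m + 2 + 2 * logb eta (2 / ln eta) + 2 * pos_part (logb eta (1 / d)).
Proof.
  intros Heta Hm Ht Hd Hdt.
  set (L := ln eta) in *.
  set (u := logb eta t) in *.
  set (D := pos_part (logb eta (1 / d))).
  assert (HL : 0 < L) by (apply ln_gt0; lra).
  assert (HLu : L * u = ln t) by (unfold u, logb; fold L; field; lra).
  assert (Hu : 0 < u) by (pose proof (ln_gt0 t Ht); nra).
  assert (HY : 0 < ln (m + u)) by (apply ln_gt0; lra).
  assert (Hlog : ln d + ln t < ln 4 + L + ln (ln (m + u))).
  { assert (Hlt : ln (d * t) < ln (4 * eta * ln (m + u)))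
      by (apply ln_increasing; nra).
    rewrite !ln_mult in Hlt by nra.
    exact Hlt. }
  assert (Hln4 : ln 4 = 2 * ln 2).
  { replace 4 with (2 * 2) by lra. rewrite ln_mult; lra. }
  assert (Hln2 : ln 2 <= 1) by (pose proof (ln_le_sub1 2); lra).
  assert (Hlnln : ln (ln (m + u)) + ln (L / 2) + 2 <= L / 2 * (m + u))
    by (apply ln_ln_le; lra).
  assert (Hln_half : ln (L / 2) = - ln (2 / L)).
  { replace (L / 2) with (/ (2 / L)) by (field; lra).
    apply ln_Rinv, Rdiv_lt_0_compat; lra. }
  assert (Hd_inv : - ln d <= L * D).
  { replace (- ln d) with (ln (1 / d)).
    - apply ln_le_mul_pos_part_logb; lra.
    - unfold Rdiv; rewrite Rmult_1_l; apply ln_Rinv; lra. }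
  assert (HlogbL : L * logb eta (2 / L) = ln (2 / L))
    by (unfold logb; fold L; field; lra).
  apply (Rmult_le_reg_l L); [lra |].
  nra.
Qed.

Theorem lemma2 (t eta m d w : R) :
  1 < t -> 1 < eta -> 1 <= m -> 0 < d -> 0 < w < 1 ->
  d <= eta * ln (1 / w) / t + 2 * eta * ln (m + logb eta t) / t ->
  t <= 2 * eta / d *
         ln (2 * m + 2 + 2 * logb eta (2 / ln eta) + 2 * pos_part (logb eta (1 / d)))
       + 2 * eta / d * ln (1 / w).
Proof.
  intros Ht Heta Hm Hd [Hw0 Hw1] Hdt.
  set (X := 2 * m + 2 + 2 * logb eta (2 / ln eta) + 2 * pos_part (logb eta (1 / d))).
  set (a := ln (1 / w)) in *.
  set (Y := ln (m + logb eta t)) in Hdt.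
  assert (HlnX : 0 <= ln X).
  { apply ln_ge0.
    pose proof (logb_2_div_ln_ge eta Heta).
    assert (0 <= pos_part (logb eta (1 / d))) by apply Rmax_r.
    unfold X; lra. }
  assert (Ha : 0 < a).
  { apply ln_gt0. apply (Rmult_lt_reg_r w); [lra |].
    replace (1 / w * w) with 1 by (field; lra); lra. }
  assert (Hdt' : d * t <= eta * a + 2 * eta * Y).
  { apply (Rmult_le_compat_r t) in Hdt; [| lra].
    replace ((eta * a / t + 2 * eta * Y / t) * t) with (eta * a + 2 * eta * Y)
      in Hdt by (field; lra).
    lra. }
  apply (Rmult_le_reg_l d); [lra |].
  replace (d * (2 * eta / d * ln X + 2 * eta / d * a))
    with (2 * eta * ln X + 2 * eta * a) by (field; lra).
  destruct (Rle_lt_dec (4 * eta * Y) (d * t)) as [Hbig | Hsmall].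
  - nra.
  - assert (HYX : Y <= ln X).
    { assert (0 < logb eta t)
        by (unfold logb; apply Rdiv_lt_0_compat; apply ln_gt0; lra).
      apply ln_le; [lra |].
      apply add_logb_le_of_mul_lt; assumption. }
    nra.
Qed.
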